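(* Let $P=\bigsqcup_{n\ge1}P_n$ with the operations $\dashv,\vdash,\perp$ described in the context, and extend these operations bilinearly to the graded vector space $\bigoplus_{n\ge1}K[P_n]$, where $K[P_n]$ is the $K$-vector space with basis $P_n$. Then $\bigl(\bigoplus_{n\ge1}K[P_n];\dashv,\vdash,\perp\bigr)$ is an associative trialgebra. Moreover, it is the free associative trialgebra on one generator $\{0\}\in P_1$: for every associative trialgebra $A$ and every $a\in A$ there is a unique morphism of associative trialgebras $\bigoplus_{n\ge1}K[P_n]\to A$ sending $\{0\}$ to $a$.
   Context: Let $K$ be a field. An associative trialgebra is a $K$-vector space $A$ with three bilinear operations $\dashv$ (left), $\vdash$ (right), $\perp$ (middle), $A\otimes A\to A$, satisfying for all $x,y,z\in A$ the following 11 relations: (1) $(x\dashv y)\dashv z=x\dashv(y\dashv z)$; (2) $(x\dashv y)\dashv z=x\dashv(y\vdash z)$; (3) $(x\vdash y)\dashv z=x\vdash(y\dashv z)$; (4) $(x\dashv y)\vdash z=x\vdash(y\vdash z)$; (5) $(x\vdash y)\vdash z=x\vdash(y\vdash z)$; (6) $(x\dashv y)\dashv z=x\dashv(y\perp z)$; (7) $(x\perp y)\dashv z=x\perp(y\dashv z)$; (8) $(x\dashv y)\perp z=x\perp(y\vdash z)$; (9) $(x\vdash y)\perp z=x\vdash(y\perp z)$; (10) $(x\perp y)\vdash z=x\vdash(y\vdash z)$; (11) $(x\perp y)\perp z=x\perp(y\perp z)$. A morphism of associative trialgebras is a linear map preserving all three operations. For $n\ge1$ let $[n-1]=\{0,1,\dots,n-1\}$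 and let $P_n$ be the set of nonempty subsets of $[n-1]$. For $p,q\ge1$ let $\mathrm{bij}:[p-1]\sqcup[q-1]\to[p+q-1]$ be the bijection which is the identity on the first copy and sends $k$ in the second copy to $p+k$. For $X\in P_p$ and $Y\in P_q$ define elements of $P_{p+q}$: - $X\dashv Y=\mathrm{bij}(X)$, the image of $X$ viewed in the first copy; - $X\vdash Y=\mathrm{bij}(Y)$, the image of $Y$ viewed in the second copy; - $X\perp Y=\mathrm{bij}(X\sqcup Y)$. *)

From HB Require Import structures.
From mathcomp Require Import all_boot all_order all_algebra.
From mathcomp Require Import finmap.
From mathcomp Require Import monalg.

Set Implicit Arguments.
Unset Strict Implicit.
Unset Printing Implicit Defensive.

Import GRing.Theory.
Local Open Scope ring_scope.

Section Trialgebra.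
Variables (K : fieldType) (A : lmodType K).

Definition bilinear_op (op : A -> A -> A) : Prop :=
  (forall (c : K) (x y z : A), op (c *: x + y) z = c *: op x z + op y z) /\
  (forall (c : K) (x y z : A), op x (c *: y + z) = c *: op x y + op x z).

(* l = "dashv" (left), r = "vdash" (right), m = "perp" (middle) *)
Definition is_trialgebra (l r m : A -> A -> A) : Prop :=
  bilinear_op l /\ bilinear_op r /\ bilinear_op m /\
  forall x y z : A,
      l (l x y) z = l x (l y z) /\         (* (1)  *)
      l (l x y) z = l x (r y z) /\         (* (2)  *)
      l (r x y) z = r x (l y z) /\         (* (3)  *)
      r (l x y) z = r x (r y z) /\         (* (4)  *)
      r (r x y) z = r x (r y z) /\         (* (5)  *)
      l (l x y) z = l x (m y z) /\         (* (6)  *)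
      l (m x y) z = m x (l y z) /\         (* (7)  *)
      m (l x y) z = m x (r y z) /\         (* (8)  *)
      m (r x y) z = r x (m y z) /\         (* (9)  *)
      r (m x y) z = r x (r y z) /\         (* (10) *)
      m (m x y) z = m x (m y z).            (* (11) *)

End Trialgebra.

Definition trialg_morphism (K : fieldType) (A B : lmodType K)
    (lA rA mA : A -> A -> A) (lB rB mB : B -> B -> B) (f : A -> B) : Prop :=
  [/\ forall (c : K) (x y : A), f (c *: x + y) = c *: f x + f y,
      forall x y : A, f (lA x y) = lB (f x) (f y),
      forall x y : A, f (rA x y) = rB (f x) (f y) &
      forall x y : A, f (mA x y) = mB (f x) (f y)].

(* The set P = disjoint union of the P_n, n >= 1, where P_n is the set of
   nonempty subsets of [n-1] = {0,...,n-1}.            *)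

Definition inP (x : nat * {fset nat}) : bool :=
  [&& (0 < x.1)%N, x.2 != fset0 & [forall k : x.2, (val k < x.1)%N]].

Definition P := {x : nat * {fset nat} | inP x}.
HB.instance Definition _ := [Choice of P by <:].

Definition Pdeg (X : P) : nat := (val X).1.
Definition Pset (X : P) : {fset nat} := (val X).2.

Lemma inP_gen : inP (1%N, [fset 0%N]%fset).
Proof.
rewrite /inP /=; apply/andP; split.
  by apply/fset0Pn; exists 0%N; rewrite inE.
apply/forallP => k; have := fsvalP k; rewrite inE => /eqP Hk.
by rewrite /= Hk.
Qed.
Definition Pgen : P := Sub (1%N, [fset 0%N]%fset) inP_gen.

(* shift of a set by p: image of the second copy under bij *)
Definition shiftf (p : nat) (Y : {fset nat}) : {fset nat} :=
  [fset (p + k)%N | k in Y]%fset.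

Lemma inP_l (X Y : P) :
  inP ((Pdeg X + Pdeg Y)%N, Pset X).
Proof.
case: X Y => [[p X] HX] [[q Y] HY]; rewrite /Pdeg /Pset /=.
case/and3P: HX => p0 X0 /forallP HX; case/and3P: HY => q0 _ _.
rewrite /inP /= X0 addn_gt0 p0 /=; apply/forallP => k.
by apply: (leq_trans (HX k)); rewrite leq_addr.
Qed.

Lemma inP_r (X Y : P) :
  inP ((Pdeg X + Pdeg Y)%N, shiftf (Pdeg X) (Pset Y)).
Proof.
case: X Y => [[p X] HX] [[q Y] HY]; rewrite /Pdeg /Pset /=.
case/and3P: HX => p0 _ _; case/and3P: HY => q0 Y0 /forallP HY.
rewrite /inP /= addn_gt0 p0 /=; apply/andP; split.
  case/fset0Pn: Y0 => y Hy; apply/fset0Pn; exists (p + y)%N.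
  by apply/imfsetP; exists y.
apply/forallP => -[k /imfsetP [y /= Hy ->]] /=.
by rewrite ltn_add2l (HY [` Hy]%fset).
Qed.

Lemma inP_m (X Y : P) :
  inP ((Pdeg X + Pdeg Y)%N, (Pset X `|` shiftf (Pdeg X) (Pset Y))%fset).
Proof.
have /and3P [H1 H2 /forallP H3] := inP_l X Y.
have /and3P [_ H5 /forallP H6] := inP_r X Y.
rewrite /inP /= H1 /=; apply/andP; split.
  by apply: contra H2; rewrite fsetU_eq0 => /andP [].
apply/forallP => -[k /fsetUP [Hk|Hk]] /=.
  exact: (H3 [` Hk]%fset).
exact: (H6 [` Hk]%fset).
Qed.

(* X -| Y = bij(X), X |- Y = bij(Y), X _|_ Y = bij(X u Y), in P_{p+q} *)
Definition Pl (X Y : P) : P := Sub _ (inP_l X Y).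
Definition Pr (X Y : P) : P := Sub _ (inP_r X Y).
Definition Pm (X Y : P) : P := Sub _ (inP_m X Y).

(* The graded vector space  (+)_{n>=1} K[P_n] = K[P], the K-vector space
   with basis P, realised as finitely supported functions P -> K.
   Operations are the bilinear extensions of Pl, Pr, Pm.                *)

Definition KP (K : fieldType) := {malg K[P]}.

Definition bilin_ext (K : fieldType) (o : P -> P -> P) (x y : {malg K[P]})
  : {malg K[P]} :=
  \sum_(a <- msupp x) \sum_(b <- msupp y) (x@_a * y@_b) *: << o a b >>.

Definition KP_l (K : fieldType) := @bilin_ext K Pl.
Definition KP_r (K : fieldType) := @bilin_ext K Pr.
Definition KP_m (K : fieldType) := @bilin_ext K Pm.

Definition KP_gen (K : fieldType) : {malg K[P]} := << Pgen >>.

(* On the basis P each of the eleven relations holds because both sides are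
   the same set of positions in [p+q+r-1]; bilinear extension preserves such
   identities.  For freeness, every X in P_n with n > 1 is {0} -| Y, {0} |- Y
   or {0} _|_ Y with Y in P_(n-1): the first when X = {0} (Y then arbitrary),
   the second when 0 is not in X, the third otherwise.  Unfolding this
   decomposition from {0} |-> a defines the image of every basis element;
   relations (1), (2) and (6) show that a -| w does not depend on the arbitrary
   Y, and the eleven relations applied to ({0} o Y) o' Z make the linear
   extension a morphism.  Uniqueness follows from the same decomposition. *)
From HB Require Import structures.
From mathcomp Require Import all_boot all_order all_algebra.
From mathcomp Require Import finmap.
From mathcomp Require Import monalg.
Set Implicit Arguments.
Unset Strict Implicit.
Unset Printing Implicit Defensive.
Import GRing.Theory.
Local Open Scope ring_scope.

Definition trialgebra_axioms (T : Type) (l r m : T -> T -> T) : Prop :=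
  forall x y z : T,
      l (l x y) z = l x (l y z) /\
      l (l x y) z = l x (r y z) /\
      l (r x y) z = r x (l y z) /\
      r (l x y) z = r x (r y z) /\
      r (r x y) z = r x (r y z) /\
      l (l x y) z = l x (m y z) /\
      l (m x y) z = m x (l y z) /\
      m (l x y) z = m x (r y z) /\
      m (r x y) z = r x (m y z) /\
      r (m x y) z = r x (r y z) /\
      m (m x y) z = m x (m y z).

Section SetsOfPositions.
Local Open Scope fset_scope.
Implicit Types (S X Y Z : {fset nat}) (p q k : nat).

Lemma in_shiftf p Y k : (k \in shiftf p Y) = (p <= k)%N && ((k - p)%N \in Y).
Proof.
apply/imfsetP/andP => [[j /= Hj ->]|[le_pk Hk]]; first by rewrite leq_addr addKn.
by exists (k - p)%N; rewrite ?subnKC.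
Qed.

Lemma shiftfD p q Z : shiftf p (shiftf q Z) = shiftf (p + q) Z.
Proof.
apply/fsetP => k; rewrite !in_shiftf.
have [le_pk|lt_kp] := leqP p k; last by rewrite [(p + q <= k)%N]leqNgt ltn_addr.
by rewrite subnDA leq_subRL.
Qed.

Lemma shiftfU p Y Z : shiftf p (Y `|` Z) = shiftf p Y `|` shiftf p Z.
Proof. by apply/fsetP => k; rewrite !(in_fsetU, in_shiftf) andb_orr. Qed.

Definition unshift1 X : {fset nat} := [fset k.-1 | k in X & (0 < k)%N].

Lemma in_unshift1 X k : (k \in unshift1 X) = (k.+1 \in X).
Proof.
apply/imfsetP/idP => [[j /andP [Hj j_gt0] ->]|Hk]; first by rewrite prednK.
by exists k.+1; rewrite ?inE ?Hk.
Qed.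

Lemma unshift1_set0 : unshift1 [fset 0%N] = fset0.
Proof. by apply/fsetP => k; rewrite in_unshift1 !inE. Qed.

Lemma unshift1_shiftf1 S : unshift1 (shiftf 1 S) = S.
Proof. by apply/fsetP => k; rewrite in_unshift1 in_shiftf subn1. Qed.

Lemma unshift1_set0U S : unshift1 ([fset 0%N] `|` S) = unshift1 S.
Proof. by apply/fsetP => k; rewrite !in_unshift1 in_fsetU inE. Qed.

End SetsOfPositions.

Section PBasics.
Local Open Scope fset_scope.
Implicit Types X Y Z : P.

Lemma Pdeg_gt0 X : (0 < Pdeg X)%N.
Proof. by case/and3P: (valP X). Qed.

Lemma Pset_neq0 X : Pset X != fset0.
Proof. by case/and3P: (valP X). Qed.

Lemma Pset_lt X k : k \in Pset X -> (k < Pdeg X)%N.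
Proof. by move=> Hk; case/and3P: (valP X) => _ _ /forallP /(_ [` Hk]). Qed.

Lemma P_eq X Y : Pdeg X = Pdeg Y -> Pset X = Pset Y -> X = Y.
Proof.
case: X Y => [[n S] ?] [[n' S'] ?]; rewrite /Pdeg /Pset /= => En ES.
by apply: val_inj; rewrite /= En ES.
Qed.

Lemma P_exists n (S : {fset nat}) : (0 < n)%N -> S != fset0 ->
  (forall k, k \in S -> k < n)%N -> exists X, Pdeg X = n /\ Pset X = S.
Proof.
move=> n_gt0 S_neq0 S_lt; have HX : inP (n, S).
  by rewrite /inP n_gt0 S_neq0; apply/forallP => k; apply: S_lt (fsvalP k).
by exists (Sub _ HX).
Qed.

Lemma Pdeg_l X Y : Pdeg (Pl X Y) = (Pdeg X + Pdeg Y)%N. Proof. by []. Qed.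
Lemma Pdeg_r X Y : Pdeg (Pr X Y) = (Pdeg X + Pdeg Y)%N. Proof. by []. Qed.
Lemma Pdeg_m X Y : Pdeg (Pm X Y) = (Pdeg X + Pdeg Y)%N. Proof. by []. Qed.
Lemma Pset_l X Y : Pset (Pl X Y) = Pset X. Proof. by []. Qed.
Lemma Pset_r X Y : Pset (Pr X Y) = shiftf (Pdeg X) (Pset Y). Proof. by []. Qed.
Lemma Pset_m X Y : Pset (Pm X Y) = Pset X `|` shiftf (Pdeg X) (Pset Y).
Proof. by []. Qed.

Lemma Pdeg_gen : Pdeg Pgen = 1%N. Proof. by []. Qed.
Lemma Pset_gen : Pset Pgen = [fset 0%N]. Proof. by []. Qed.

Definition PE := (Pdeg_l, Pdeg_r, Pdeg_m, Pset_l, Pset_r, Pset_m).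

Lemma P_trialgebra_axioms : trialgebra_axioms Pl Pr Pm.
Proof.
by move=> X Y Z; do !split; apply: P_eq; rewrite !(PE, shiftfD, shiftfU, addnA, fsetUA).
Qed.

Lemma P_decomp X : (1 < Pdeg X)%N -> exists2 Y,
  (Pdeg Y < Pdeg X)%N & [\/ X = Pl Pgen Y, X = Pr Pgen Y | X = Pm Pgen Y].
Proof.
move=> deg_gt1; set n := (Pdeg X).-1.
have degX : Pdeg X = (1 + n)%N by rewrite add1n prednK // ltnW.
have n_gt0 : (0 < n)%N by rewrite -ltnS prednK // ltnW.
have [S0|S_neq0] := eqVneq (unshift1 (Pset X)) fset0.
  have [Y [degY _]] : exists Y, Pdeg Y = n /\ Pset Y = [fset 0%N].
    apply: P_exists => //; first by apply/fset0Pn; exists 0%N; rewrite inE.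
    by move=> k; rewrite inE => /eqP ->.
  exists Y; first by rewrite degY degX.
  apply: Or31; apply: P_eq; first by rewrite Pdeg_l degY degX.
  have {}S0 k : k.+1 \notin Pset X by rewrite -in_unshift1 S0.
  have /fset0Pn [j Hj] := Pset_neq0 X.
  apply/fsetP => -[|k]; rewrite inE ?(negbTE (S0 k)) //.
  by case: j Hj => // j; rewrite (negbTE (S0 j)).
have [Y [degY setY]] : exists Y, Pdeg Y = n /\ Pset Y = unshift1 (Pset X).
  by apply: P_exists => // k; rewrite in_unshift1 => /Pset_lt; rewrite degX.
exists Y; first by rewrite degY degX.
have setX k : (k.+1 \in Pset X) = (k \in Pset Y) by rewrite setY in_unshift1.
case: (boolP (0%N \in Pset X)) => X0; [apply: Or33 | apply: Or32];
  (apply: P_eq; first by rewrite PE degY degX);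
  apply/fsetP => -[|k];
  by rewrite PE ?in_fsetU ?inE in_shiftf Pdeg_gen ?(negbTE X0) ?X0 //= subn1 setX.
Qed.

Lemma P_ind_gen (Q : P -> Prop) : Q Pgen ->
  (forall Y, Q Y -> Q (Pl Pgen Y)) -> (forall Y, Q Y -> Q (Pr Pgen Y)) ->
  (forall Y, Q Y -> Q (Pm Pgen Y)) -> forall X, Q X.
Proof.
move=> Qgen Ql Qr Qm X; elim: {X}(Pdeg X) {-2}X (leqnn (Pdeg X)) => [|n IH] X degX.
  by have := Pdeg_gt0 X; rewrite ltnNge degX.
case: (ltngtP (Pdeg X) 1) => [|deg_gt1|deg1]; first by rewrite ltnS leqNgt Pdeg_gt0.
  have [Y ltYX [->|->|->]] := P_decomp deg_gt1;
    [apply: Ql | apply: Qr | apply: Qm]; apply: IH; exact: leq_trans ltYX degX.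
suff -> : X = Pgen by [].
apply: P_eq => //; apply/fsetP => k; rewrite inE; apply/idP/eqP => [/Pset_lt|->].
  by rewrite deg1; case: k.
have /fset0Pn [j Hj] := Pset_neq0 X.
by have := Pset_lt Hj; rewrite deg1; case: j Hj.
Qed.

End PBasics.

Section LinearExtension.
Variables (K : fieldType) (V : lmodType K).

Definition lin_ext (F : P -> V) (x : {malg K[P]}) : V :=
  \sum_(k <- msupp x) x@_k *: F k.

Lemma lin_extEw F x (d : {fset P}) : (msupp x `<=` d)%fset ->
  lin_ext F x = \sum_(k <- d) x@_k *: F k.
Proof.
move=> sub_xd; rewrite /lin_ext (big_fset_incl _ sub_xd) // => k _ /mcoeff_outdom ->.
by rewrite scale0r.
Qed.

Lemma lin_ext_linear F : linear (lin_ext F).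
Proof.
move=> c x y; pose d := (msupp x `|` msupp y)%fset.
have sub_xy : (msupp (c *: x + y) `<=` d)%fset.
  exact: fsubset_trans (msuppD_le _ _) (fsetSU _ (msuppZ_le _ _)).
rewrite (lin_extEw F sub_xy) (lin_extEw F (fsubsetUl _ _ : msupp x `<=` d)%fset).
rewrite (lin_extEw F (fsubsetUr _ _ : msupp y `<=` d)%fset) scaler_sumr -big_split.
by apply: eq_bigr => k _; rewrite mcoeffD mcoeffZ scalerDl scalerA.
Qed.

Lemma lin_extU F k : lin_ext F << k >> = F k.
Proof. by rewrite (lin_extEw F (@msuppU_le _ _ k 1)) big_seq_fset1 mcoeffUU scale1r. Qed.

End LinearExtension.

Section LinearMaps.
Variables (K : fieldType) (V W : lmodType K).

Lemma linear_lin_ext (h : V -> W) F x :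
  linear h -> h (lin_ext F x) = lin_ext (h \o F) x.
Proof.
move=> lin_h; have h0 : h 0 = 0.
  by move/eqP: (lin_h 1 0 0); rewrite !scale1r addr0 -subr_eq subrr eq_sym => /eqP.
have hD : {morph h : u v / u + v} by move=> u v; have := lin_h 1 u v; rewrite !scale1r.
rewrite /lin_ext (big_morph h hD h0); apply: eq_bigr => k _.
by rewrite -[_ *: F k]addr0 lin_h h0 addr0.
Qed.

End LinearMaps.

Lemma lin_ext_basis (K : fieldType) (x : {malg K[P]}) :
  lin_ext (fun k => << k >>) x = x.
Proof.
rewrite {2}(monalgE x); apply: eq_bigr => k _.
by apply/malgP => j; rewrite mcoeffZ !mcoeffU; case: eqP; rewrite ?mulr1 ?mulr0.
Qed.

Lemma malg_linear_eq (K : fieldType) (V : lmodType K) (h g : {malg K[P]} -> V) :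
  linear h -> linear g -> (forall k, h << k >> = g << k >>) -> forall x, h x = g x.
Proof.
move=> lin_h lin_g eq_hg x; rewrite -[x]lin_ext_basis.
rewrite (linear_lin_ext _ _ lin_h) (linear_lin_ext _ _ lin_g).
by apply: eq_bigr => k _; rewrite /= eq_hg.
Qed.

Lemma bilinear_op_linear_l (K : fieldType) (V : lmodType K) (op : V -> V -> V) z :
  bilinear_op op -> linear (op ^~ z).
Proof. by case=> op_l _ c x y; apply: op_l. Qed.

Lemma bilinear_op_linear_r (K : fieldType) (V : lmodType K) (op : V -> V -> V) x :
  bilinear_op op -> linear (op x).
Proof. by case=> _ op_r c y z; apply: op_r. Qed.

Section BilinearExtension.
Variable K : fieldType.
Implicit Types (o : P -> P -> P) (x y z : {malg K[P]}).

Lemma bilin_extE o x y :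
  bilin_ext o x y = lin_ext (fun a => lin_ext (fun b => << o a b >>) y) x.
Proof.
rewrite /bilin_ext /lin_ext; apply: eq_bigr => a _; rewrite scaler_sumr.
by apply: eq_bigr => b _; rewrite scalerA.
Qed.

Lemma bilin_extE_r o x y :
  bilin_ext o x y = lin_ext (fun b => lin_ext (fun a => << o a b >>) x) y.
Proof.
rewrite /bilin_ext /lin_ext exchange_big; apply: eq_bigr => b _; rewrite scaler_sumr.
by apply: eq_bigr => a _; rewrite scalerA mulrC.
Qed.

Lemma bilinear_bilin_ext o : bilinear_op (@bilin_ext K o).
Proof.
split=> c x y z; first by rewrite !bilin_extE; apply: lin_ext_linear.
by rewrite !bilin_extE_r; apply: lin_ext_linear.
Qed.

Lemma bilin_extU o a b : bilin_ext o << a >> << b >> = << o a b >> :> {malg K[P]}.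
Proof. by rewrite bilin_extE !lin_extU. Qed.

Lemma bilin_ext_assoc o1 o2 o3 o4 :
  (forall a b c, o2 (o1 a b) c = o3 a (o4 b c)) ->
  forall x y z, bilin_ext o2 (bilin_ext o1 x y) z = bilin_ext o3 x (@bilin_ext K o4 y z).
Proof.
move=> o_assoc x y z.
have lin_o2 := bilinear_op_linear_l z (bilinear_bilin_ext o2).
rewrite [bilin_ext o1 x y]bilin_extE [bilin_ext o3 x _]bilin_extE.
rewrite (linear_lin_ext _ _ lin_o2); apply: eq_bigr => a _; congr (_ *: _) => /=.
rewrite [bilin_ext o4 y z]bilin_extE (linear_lin_ext _ _ lin_o2).
rewrite (linear_lin_ext _ _ (lin_ext_linear _)).
apply: eq_bigr => b _; congr (_ *: _) => /=.
rewrite bilin_extE lin_extU (linear_lin_ext _ _ (lin_ext_linear _)).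
by apply: eq_bigr => c _; rewrite /= lin_extU o_assoc.
Qed.

Lemma KP_trialgebra : is_trialgebra (@KP_l K) (@KP_r K) (@KP_m K).
Proof.
do 3 (split; first exact: bilinear_bilin_ext).
move=> x y z; do !split; apply: bilin_ext_assoc => a b c.
all: by have := P_trialgebra_axioms a b c; intuition.
Qed.

End BilinearExtension.

Lemma lin_ext_bilin_ext (K : fieldType) (V : lmodType K) (op : V -> V -> V)
    (o : P -> P -> P) (F : P -> V) :
  bilinear_op op -> (forall a b, F (o a b) = op (F a) (F b)) ->
  forall x y : {malg K[P]}, lin_ext F (bilin_ext o x y) = op (lin_ext F x) (lin_ext F y).
Proof.
move=> bilin_op F_morph x y.
rewrite bilin_extE (linear_lin_ext _ _ (lin_ext_linear F)).
rewrite (linear_lin_ext _ _ (bilinear_op_linear_l _ bilin_op)).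
apply: eq_bigr => a _; congr (_ *: _) => /=.
rewrite (linear_lin_ext _ _ (lin_ext_linear F)).
rewrite (linear_lin_ext _ _ (bilinear_op_linear_r _ bilin_op)).
by apply: eq_bigr => b _; rewrite /= lin_extU F_morph.
Qed.

Section FreeTrialgebra.
Variables (K : fieldType) (A : lmodType K) (l r m : A -> A -> A).
Hypothesis A_axioms : trialgebra_axioms l r m.
Variable a : A.

(* [trial_eval n X] is the image of the element (n+1, X) of P.  In the first
   branch X = {0} and unshift1 X = fset0 is not a set of P; the choice is
   irrelevant by [l_trial_eval]. *)
Fixpoint trial_eval (n : nat) (X : {fset nat}) : A :=
  if n is n'.+1 then
    let w := trial_eval n' (unshift1 X) in
    if unshift1 X == fset0 then l a w else if 0%N \in X then m a w else r a w
  else a.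

Definition Pimage (X : P) : A := trial_eval (Pdeg X).-1 (Pset X).

(* By (1), (2) and (6), [l u (a o w) = l (l u a) w] for each operation o. *)
Lemma l_trial_eval u n S : l u (trial_eval n S) = iter n.+1 (l^~ a) u.
Proof.
elim: n u S => [//|n IH] u S; rewrite iterSr -(IH (l u a) (unshift1 S)) /=.
have [ax1 [ax2 [_ [_ [_ [ax6 _]]]]]] := A_axioms u a (trial_eval n (unshift1 S)).
by case: ifP => _; [|case: ifP => _]; [rewrite ax1 | rewrite ax6 | rewrite ax2].
Qed.

Lemma trial_eval_Pdeg Z S : trial_eval (Pdeg Z) S = trial_eval (Pdeg Z).-1.+1 S.
Proof. by rewrite prednK ?Pdeg_gt0. Qed.

Lemma Pimage_gen : Pimage Pgen = a.
Proof. by []. Qed.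

Lemma Pimage_l Z : Pimage (Pl Pgen Z) = l a (Pimage Z).
Proof.
rewrite /Pimage Pdeg_l Pset_l Pset_gen add1n /= trial_eval_Pdeg /=.
by rewrite unshift1_set0 eqxx !l_trial_eval.
Qed.

Lemma Pimage_r Z : Pimage (Pr Pgen Z) = r a (Pimage Z).
Proof.
rewrite /Pimage Pdeg_r Pset_r Pdeg_gen add1n /= trial_eval_Pdeg /=.
by rewrite unshift1_shiftf1 (negbTE (Pset_neq0 Z)) in_shiftf.
Qed.

Lemma Pimage_m Z : Pimage (Pm Pgen Z) = m a (Pimage Z).
Proof.
rewrite /Pimage Pdeg_m Pset_m Pset_gen Pdeg_gen add1n /= trial_eval_Pdeg /=.
by rewrite unshift1_set0U unshift1_shiftf1 (negbTE (Pset_neq0 Z)) in_fsetU inE.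
Qed.

Lemma Pimage_morph X Y :
  [/\ Pimage (Pl X Y) = l (Pimage X) (Pimage Y),
      Pimage (Pr X Y) = r (Pimage X) (Pimage Y) &
      Pimage (Pm X Y) = m (Pimage X) (Pimage Y)].
Proof.
elim/P_ind_gen: X Y => [|X IH|X IH|X IH] Y.
  by rewrite Pimage_gen Pimage_l Pimage_r Pimage_m.
all: have [I1 I2 I3] := IH Y.
all: have [p1 [p2 [p3 [p4 [p5 [p6 [p7 [p8 [p9 [p10 p11]]]]]]]]]] :=
  P_trialgebra_axioms Pgen X Y.
all: have [a1 [a2 [a3 [a4 [a5 [a6 [a7 [a8 [a9 [a10 a11]]]]]]]]]] :=
  A_axioms a (Pimage X) (Pimage Y).
- by split; [rewrite p1 !Pimage_l I1 a1 | rewrite p4 Pimage_l !Pimage_r I2 a4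
            | rewrite p8 Pimage_l !Pimage_m I2 a8].
- by split; [rewrite p3 !Pimage_r I1 a3 | rewrite p5 !Pimage_r I2 a5
            | rewrite p9 !Pimage_r I3 a9].
- by split; [rewrite p7 !Pimage_m I1 a7 | rewrite p10 Pimage_m !Pimage_r I2 a10
            | rewrite p11 !Pimage_m I3 a11].
Qed.

End FreeTrialgebra.

Theorem theorem1p7 (K : fieldType) :
  is_trialgebra (@KP_l K) (@KP_r K) (@KP_m K) /\
  forall (A : lmodType K) (lA rA mA : A -> A -> A),
    is_trialgebra lA rA mA ->
    forall a : A,
      exists f : {malg K[P]} -> A,
        [/\ trialg_morphism (@KP_l K) (@KP_r K) (@KP_m K) lA rA mA f,
            f (KP_gen K) = a &
            forall g : {malg K[P]} -> A,
              trialg_morphism (@KP_l K) (@KP_r K) (@KP_m K) lA rA mA g ->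
              g (KP_gen K) = a -> forall x, g x = f x].
Proof.
split; first exact: KP_trialgebra.
move=> A lA rA mA [bil_l [bil_r [bil_m A_axioms]]] a.
have Pimage_morph := Pimage_morph A_axioms a.
exists (lin_ext (Pimage lA rA mA a)); split; first split.
- exact: lin_ext_linear.
- by apply: lin_ext_bilin_ext => // X Y; case: (Pimage_morph X Y).
- by apply: lin_ext_bilin_ext => // X Y; case: (Pimage_morph X Y).
- by apply: lin_ext_bilin_ext => // X Y; case: (Pimage_morph X Y).
- exact: lin_extU.
move=> g [lin_g g_l g_r g_m] g_gen.
have g_basis X : g << X >> = Pimage lA rA mA a X.
  elim/P_ind_gen: X => [|X IH|X IH|X IH]; first exact: g_gen.
  - by rewrite (Pimage_l A_axioms) -(bilin_extU _ Pl) g_l g_gen IH.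
  - by rewrite Pimage_r -(bilin_extU _ Pr) g_r g_gen IH.
  - by rewrite Pimage_m -(bilin_extU _ Pm) g_m g_gen IH.
apply: malg_linear_eq => // [|X]; first exact: lin_ext_linear.
by rewrite g_basis lin_extU.
Qed.
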